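(* Let $\pi=(d_1\le\cdots\le d_n)$ be a graphical sequence and let $g(\pi)=\max\{i\in\mathbb{Z}^+ : f(i)<\infty\}$, with $f$ as defined in the context. Then there is a graphical sequence $\pi'$ of length $n$ with $\pi'\le\pi$ termwise which has a realization that is a disjoint union of exactly $g(\pi)$ cliques (so this realization has independence number $g(\pi)$). Consequently, for any integer $k>g(\pi)$, $\pi$ is minorized by a graphical sequence having a realization with independence number less than $k$.
   Context: Graphs are finite and simple; a graphical sequence is a nondecreasing integer sequence that is the degree sequence of some graph. Define $f:\mathbb{Z}^+\to\{d_1,\dots,d_n,\infty\}$ recursively, tracking an index: $f(1)=d_1$ (with index $j_1=1$); if $f(i)=d_{j_i}$ is finite then, if $j_i+f(i)+1\le n$, set $j_{i+1}=j_i+f(i)+1$ and $f(i+1)=d_{j_{i+1}}$, and otherwise $f(i+1)=\infty$; if $f(i)=\infty$ then $f(i+1)=\infty$. *)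

From mathcomp Require Import all_boot.
Set Implicit Arguments. Unset Strict Implicit.
 Unset Printing Implicit Defensive.

Definition simple_graph (n : nat) (e : rel 'I_n) : Prop :=
  (forall u v, e u v = e v u) /\ (forall u, ~~ e u u).

Definition deg (n : nat) (e : rel 'I_n) (u : 'I_n) : nat := #|[set v | e u v]|.

(* e is a realization of d (vertex i has degree d_(i+1), 0-based nth). *)
Definition realizes (d : seq nat) (e : rel 'I_(size d)) : Prop :=
  simple_graph e /\ forall i : 'I_(size d), deg e i = nth 0 d i.
Arguments realizes : clear implicits.

Definition graphical (d : seq nat) : Prop :=
  sorted leq d /\ exists e : rel 'I_(size d), realizes d e.

(* The recursion of the paper, with 1-based indices j_i; None encodes infinity. *)
Definition jstep (d : seq nat) (oj : option nat) : option nat :=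
  match oj with
  | Some j => if j + nth 0 d j.-1 + 1 <= size d
              then Some (j + nth 0 d j.-1 + 1) else None
  | None => None
  end.

Definition jidx (d : seq nat) (i : nat) : option nat := iter i.-1 (jstep d) (Some 1).

Definition f_seq (d : seq nat) (i : nat) : option nat :=
  omap (fun j => nth 0 d j.-1) (jidx d i).

Definition union_of_cliques (n g : nat) (e : rel 'I_n) : Prop :=
  exists c : 'I_n -> 'I_g,
    (forall k : 'I_g, exists u, c u = k) /\
    (forall u v, e u v = (u != v) && (c u == c v)).

Definition independent (n : nat) (e : rel 'I_n) (S : {set 'I_n}) : bool :=
  [forall u in S, forall v in S, ~~ e u v].

Definition independence_number (n : nat) (e : rel 'I_n) : nat :=
  \max_(S : {set 'I_n} | independent e S) #|S|.

From mathcomp Require Import all_boot zify.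

(* Cut the vertices 1..n into the consecutive blocks [j_i, j_(i+1)), i = 1..g,
   where j_1, ..., j_g are the indices of the recursion defining f.  Block i has
   d_(j_i) + 1 vertices, and the last block has at most d_(j_g) + 1 because the
   recursion stops there; since pi is nondecreasing, every vertex u lies in a
   block of at most d_u + 1 vertices.  Making each block a clique gives a graph
   whose degrees are bounded by pi termwise, and sorting that degree sequence
   keeps the termwise bound.  A disjoint union of g cliques has independence
   number g. *)

Lemma iter_jstep_None d i : iter i (jstep d) None = None.
Proof. by elim: i => //= i ->. Qed.

Lemma iter_jstep_shift d m i j : 0 < j ->
  iter i (jstep d) (Some (j + m)) = omap (addn m) (iter i (jstep (drop m d)) (Some j)).
Proof.
elim: i j => [|i IH] j j_gt0; first by rewrite /= addnC.
rewrite !iterSr /= size_drop nth_drop.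
have -> : (j + m).-1 = m + j.-1 by lia.
case: ifP => fits; case: ifP => fits'; try lia.
  rewrite -IH; last lia.
  by congr (iter _ _ (Some _)); lia.
by rewrite !iter_jstep_None.
Qed.

Lemma iter_jstepS_1 d i : iter i.+1 (jstep d) (Some 1) =
  if (nth 0 d 0).+2 <= size d
  then omap (addn (nth 0 d 0).+1) (iter i (jstep (drop (nth 0 d 0).+1 d)) (Some 1))
  else None.
Proof.
rewrite iterSr /= addn1 -addnS.
case: ifP => _; last exact: iter_jstep_None.
exact: iter_jstep_shift.
Qed.

Lemma count_iota_split (P : pred nat) m n : m <= n ->
  count P (iota 0 n) = count P (iota 0 m) + count (fun v => P (m + v)) (iota 0 (n - m)).
Proof.
move=> le_mn.
by rewrite -{1}(subnKC le_mn) iotaD count_cat -[0 + m]addn0 iotaDl count_map.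
Qed.

Lemma count_nth_iota (P : pred nat) (s : seq nat) :
  count P s = count (fun q => P (nth 0 s q)) (iota 0 (size s)).
Proof. by rewrite -{1}(mkseq_nth 0 s) /mkseq count_map. Qed.

Lemma sorted_nth_mono (d : seq nat) i j :
  sorted leq d -> i <= j -> j < size d -> nth 0 d i <= nth 0 d j.
Proof.
move=> sd le_ij lt_j; apply: (sorted_leq_nth leq_trans leqnn) => //; rewrite inE //.
exact: leq_ltn_trans lt_j.
Qed.

Definition class_size (n : nat) (col : nat -> nat) (u : nat) : nat :=
  count (fun v => col v == col u) (iota 0 n).

(* The classes of [col] are the cliques of the graph to be built. *)
Definition dominated_coloring (d : seq nat) (g : nat) (col : nat -> nat) : Prop :=
  [/\ forall p, p < size d -> col p < g,
      forall k, k < g -> exists2 p, p < size d & col p = k &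
      forall u, u < size d -> class_size (size d) col u <= (nth 0 d u).+1].

Lemma dominated_coloring_1 d : sorted leq d -> 0 < size d -> size d <= (nth 0 d 0).+1 ->
  dominated_coloring d 1 (fun=> 0).
Proof.
move=> sd d_gt0 small_d; split=> // [k|u lt_u].
  by rewrite ltnS leqn0 => /eqP ->; exists 0.
rewrite /class_size (eq_count (a2 := predT)) // count_predT size_iota.
by rewrite (leq_trans small_d) // ltnS sorted_nth_mono.
Qed.

Lemma dominated_coloring_cons d g col (m := (nth 0 d 0).+1) :
  sorted leq d -> m <= size d -> dominated_coloring (drop m d) g col ->
  dominated_coloring d g.+1 (fun p => if p < m then 0 else (col (p - m)).+1).
Proof.
move=> sd le_m [col_lt col_onto col_small]; rewrite size_drop in col_lt col_onto col_small.
split=> [p lt_p | [|k] lt_k | u lt_u].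
- by case: ifP => // ge_p; rewrite ltnS col_lt //; lia.
- by exists 0 => //; apply: leq_trans le_m.
- have [p lt_p <-] := col_onto k lt_k.
  by exists (m + p); [lia | rewrite ltnNge leq_addr /= addKn].
rewrite /class_size (count_iota_split _ _ _ le_m).
under [X in _ + X <= _]eq_count => v do rewrite ltnNge leq_addr /= addKn.
case: ifP => [lt_um | ge_um].
- rewrite (eq_in_count (a2 := predT)); last first.
    by move=> v; rewrite mem_iota => /andP [_ lt_vm]; rewrite /= lt_vm.
  rewrite count_predT size_iota (eq_count (a2 := pred0)) // count_pred0 addn0.
  by rewrite ltnS sorted_nth_mono.
- rewrite (eq_in_count (a2 := pred0)); last first.
    by move=> v; rewrite mem_iota => /andP [_ lt_vm]; rewrite /= lt_vm.
  rewrite count_pred0 add0n.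
  under eq_count => v do rewrite eqSS.
  have := col_small (u - m) ltac:(lia).
  by rewrite nth_drop subnKC //; lia.
Qed.

Lemma greedy_dominated_coloring g d : sorted leq d -> 0 < size d ->
  iter g (jstep d) (Some 1) <> None -> iter g.+1 (jstep d) (Some 1) = None ->
  exists col, dominated_coloring d g.+1 col.
Proof.
elim: g d => [|g IH] d sd d_gt0 j_g j_g1.
  move: j_g1; rewrite iter_jstepS_1; case: ifP => // big_d _.
  by exists (fun=> 0); apply: dominated_coloring_1; rewrite // leqNgt big_d.
move: j_g j_g1; rewrite (iter_jstepS_1 d g) (iter_jstepS_1 d g.+1); case: ifP => // lt_m.
set m := (nth 0 d 0).+1 => j_g j_g1.
have [col col_ok] : exists col, dominated_coloring (drop m d) g.+1 col.
  apply: IH; first exact: (subseq_sorted leq_trans (drop_subseq _ _) sd).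
  - by rewrite size_drop subn_gt0.
  - by case: (iter g _ _) j_g.
  - by case: (iter g.+1 _ _) j_g1.
by eexists; apply: dominated_coloring_cons (ltnW lt_m) col_ok.
Qed.

Lemma card_set_ord_count n (P : pred nat) : #|[set v : 'I_n | P v]| = count P (iota 0 n).
Proof.
rewrite cardsE cardE /enum_mem -val_enum_ord count_map size_filter.
by rewrite -enumT.
Qed.

Lemma coloring_realizes (d : seq nat) g (col : nat -> nat) :
  (forall u, u < size d -> col u < g) ->
  (forall k, k < g -> exists2 u, u < size d & col u = k) ->
  (forall u, u < size d -> nth 0 d u = (class_size (size d) col u).-1) ->
  exists e : rel 'I_(size d), realizes d e /\ union_of_cliques g e.
Proof.
move=> col_lt col_onto d_class.
pose c (u : 'I_(size d)) : 'I_g := Ordinal (col_lt u (ltn_ord u)).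
exists (fun u v => (u != v) && (c u == c v)); split; last first.
  exists c; split=> // k; have [u lt_u col_u] := col_onto k (ltn_ord k).
  by exists (Ordinal lt_u); apply: val_inj.
split; first by split=> [u v|u]; rewrite ?eqxx // eq_sym [c u == _]eq_sym.
move=> u; rewrite /deg d_class //.
have -> : [set v | (u != v) && (c u == c v)] = [set v : 'I_(size d) | col v == col u] :\ u.
  by apply/setP => v; rewrite !inE [u == v]eq_sym [c u == _]eq_sym -val_eqE.
rewrite /class_size -card_set_ord_count.
by rewrite (cardsD1 u [set v : 'I_(size d) | col v == col u]) inE eqxx.
Qed.

Definition clique_degrees (n : nat) (col : nat -> nat) : seq nat :=
  mkseq (fun u => (class_size n col u).-1) n.

Lemma class_size_perm n col (Is : seq nat) u : perm_eq Is (iota 0 n) ->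
  class_size n (col \o nth 0 Is) u = class_size n col (nth 0 Is u).
Proof.
move=> PIs; rewrite /class_size -(count_map (nth 0 Is) (fun w => col w == _)).
have -> : map (nth 0 Is) (iota 0 n) = Is.
  by rewrite -(size_iota 0 n) -(perm_size PIs) -/(mkseq _ _) mkseq_nth.
exact: permP.
Qed.

Lemma sort_clique_degrees_realizes n g (col : nat -> nat) :
  (forall u, u < n -> col u < g) -> (forall k, k < g -> exists2 u, u < n & col u = k) ->
  exists e : rel 'I_(size (sort leq (clique_degrees n col))),
    realizes (sort leq (clique_degrees n col)) e /\ union_of_cliques g e.
Proof.
move=> col_lt col_onto.
have [Is PIs ->] := perm_iota_sort leq 0 (clique_degrees n col).
rewrite size_mkseq in PIs.
have size_Is : size Is = n by rewrite (perm_size PIs) size_iota.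
have Is_lt u : u < n -> nth 0 Is u < n.
  move=> lt_u; have : nth 0 Is u \in iota 0 n by rewrite -(perm_mem PIs) mem_nth ?size_Is.
  by rewrite mem_iota.
apply: (@coloring_realizes _ _ (col \o nth 0 Is)); rewrite size_map size_Is.
- by move=> u /Is_lt /col_lt.
- move=> k /col_onto [p lt_p <-].
  have Is_p : p \in Is by rewrite (perm_mem PIs) mem_iota.
  by exists (index p Is); rewrite /= ?nth_index -?size_Is ?index_mem.
- move=> u lt_u; rewrite class_size_perm // (nth_map 0) ?size_Is //.
  by rewrite nth_mkseq ?Is_lt.
Qed.

(* If the sorted list exceeded x := d_i at position i, at most i of its entries
   would be <= x, whereas the i + 1 entries cs_0, ..., cs_i all are. *)
Lemma sort_leq_dominated (cs d : seq nat) : sorted leq d -> size cs = size d ->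
  (forall i, i < size d -> nth 0 cs i <= nth 0 d i) ->
  forall i, i < size d -> nth 0 (sort leq cs) i <= nth 0 d i.
Proof.
move=> sd size_cs cs_le i lt_i; set x := nth 0 d i.
rewrite leqNgt; apply/negP => lt_x.
have many_small : i.+1 <= count (leq^~ x) cs.
  rewrite count_nth_iota size_cs (count_iota_split _ _ _ lt_i).
  rewrite (eq_in_count (a2 := predT)) ?count_predT ?size_iota ?leq_addr //.
  move=> q; rewrite mem_iota add0n => /andP [_ lt_q] /=.
  exact: leq_trans (cs_le q (leq_trans lt_q lt_i)) (sorted_nth_mono _ q i sd lt_q lt_i).
have few_small : count (leq^~ x) (sort leq cs) <= i.
  rewrite count_nth_iota size_sort size_cs (count_iota_split _ _ _ (ltnW lt_i)).
  rewrite (eq_in_count (a2 := pred0) (s := iota 0 (size d - i))) ?count_pred0.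
    by rewrite addn0 (leq_trans (count_size _ _)) ?size_iota.
  move=> q; rewrite mem_iota => /andP [_ lt_q] /=.
  rewrite leqNgt; apply/negbF/(leq_trans lt_x).
  apply: sorted_nth_mono _ _ _ (sort_sorted leq_total cs) (leq_addr _ _) _.
  by rewrite size_sort size_cs; lia.
have perm_cs : perm_eq (sort leq cs) cs by rewrite perm_sort.
by move: few_small; rewrite (permP perm_cs) leqNgt many_small.
Qed.

Lemma independence_number_union_of_cliques n g (e : rel 'I_n) :
  union_of_cliques g e -> independence_number e <= g.
Proof.
case=> c [_ e_c]; apply/bigmax_leqP => S /forallP S_indep.
rewrite -[g]card_ord; apply: (leq_card_in c) => u v u_S v_S c_uv.
case: (eqVneq u v) => // neq_uv.
by move: (S_indep u); rewrite u_S => /forallP/(_ v); rewrite v_S e_c neq_uv c_uv eqxx.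
Qed.

Lemma f_seqS_None d i : f_seq d i.+1 = None <-> iter i (jstep d) (Some 1) = None.
Proof. by rewrite /f_seq /jidx /=; case: (iter i _ _). Qed.

Theorem mainTheorem8 (d : seq nat) (g : nat) :
  0 < size d ->
  graphical d ->
  0 < g -> f_seq d g <> None ->
  (forall i, 0 < i -> f_seq d i <> None -> i <= g) ->
  (exists d' : seq nat,
     [/\ size d' = size d, graphical d',
         (forall i, i < size d -> nth 0 d' i <= nth 0 d i) &
         exists e : rel 'I_(size d'), realizes d' e /\ union_of_cliques g e])
  /\
  (forall k, g < k ->
     exists d' : seq nat,
       [/\ size d' = size d, graphical d',
           (forall i, i < size d -> nth 0 d' i <= nth 0 d i) &
           exists e : rel 'I_(size d'), realizes d' e /\ independence_number e < k]).
Proof.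
move=> d_gt0 [sd _]; case: g => // g _ f_g g_max.
have j_g : iter g (jstep d) (Some 1) <> None by move/f_seqS_None.
have j_g1 : iter g.+1 (jstep d) (Some 1) = None.
  apply/f_seqS_None; case E: (f_seq d g.+2) => //.
  by have := g_max g.+2 isT; rewrite E ltnn => /(_ ltac:(discriminate)).
have [col [col_lt col_onto col_small]] := greedy_dominated_coloring _ _ sd d_gt0 j_g j_g1.
have [e [e_real e_cliques]] := sort_clique_degrees_realizes _ _ _ col_lt col_onto.
set d' := sort leq (clique_degrees (size d) col) in e e_real e_cliques *.
have size_d' : size d' = size d by rewrite size_sort size_mkseq.
have d'_le i : i < size d -> nth 0 d' i <= nth 0 d i.
  apply: sort_leq_dominated; rewrite ?size_mkseq // => {}i lt_i.
  by rewrite nth_mkseq // -subn1 leq_subLR add1n col_small.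
have d'_graphical : graphical d' by split; [exact: (sort_sorted leq_total) | exists e].
split; first by exists d'; split=> //; exists e.
move=> k lt_gk; exists d'; split=> //; exists e; split=> //.
exact: leq_ltn_trans (independence_number_union_of_cliques _ _ _ e_cliques) lt_gk.
Qed.
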